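(* Let $\mathcal{M}=\langle S,\iota,\mathsf{Act},P,\mathsf{Z},\mathsf{obs}\rangle$ be an MDP and $r\colon S\to\mathbb{R}_{\ge0}$. For every trace $\tau\in\mathsf{Z}^+$, $R_r(\tau)=\max_{\sigma\in\Sigma_{\mathrm{DC}}(|\tau|)}\sum_{\pi\in\mathrm{Paths}(\tau)}\Pr^\sigma(\pi\mid\tau)\cdot r(\mathrm{last}(\pi))$.
   Context: An MDP is a tuple $\langle S,\iota,\mathsf{Act},P,\mathsf{Z},\mathsf{obs}\rangle$: finite state set $S$, initial distribution $\iota\in\mathsf{Distr}(S)$, finite action set $\mathsf{Act}$, partial transition function $P\colon S\times\mathsf{Act}\rightharpoonup\mathsf{Distr}(S)$, finite observation set $\mathsf{Z}$, observation function $\mathsf{obs}\colon S\to\mathsf{Distr}(\mathsf{Z})$; $\mathsf{AvAct}(s)=\{\alpha\mid P(s,\alpha)\text{ defined}\}\neq\emptyset$. A finite path is $\pi=s_0a_0\dots a_{n-1}s_n$ with $\iota(s_0)>0$, $P(s_i,a_i)(s_{i+1})>0$; its length $|\pi|=n$ is its number of actions; $\mathrm{last}(\pi)=s_n$. A scheduler $\sigma$ maps each finite path $\pi$ to a distribution on $\mathsf{AvAct}(\mathrm{last}(\pi))$; $\Sigma$ is the set of schedulers; $\Pr^\sigma(\pi)=\iota(s_0)\prod_{i<n}\sigma(s_0a_0\dots s_i)(a_i)P(s_i,a_i)(s_{i+1})$. For a trace $\tau=z_0\dots z_n$ (length $|\tau|$) and path $\pi=s_0\dots s_m$, $\Pr(\tau\mid\pi)=\prod_{i=0}^n\mathsf{obs}(s_i)(z_i)$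 if $m=n$, else $0$; $\mathrm{Paths}(\tau)$ are the paths with as many states as $\tau$ has observations; $\Pr^\sigma(\tau)=\sum_\pi\Pr^\sigma(\pi)\Pr(\tau\mid\pi)$; $\Pr^\sigma(\pi\mid\tau)=\Pr(\tau\mid\pi)\Pr^\sigma(\pi)/\Pr^\sigma(\tau)$ ($0/0=0$). $R_r(\tau)=\sup_{\sigma\in\Sigma}\sum_{\pi\in\mathrm{Paths}(\tau)}\Pr^\sigma(\pi\mid\tau)r(\mathrm{last}(\pi))$. For $k\in\mathbb{N}$, $\Sigma_{\mathrm{DC}}(k)$ is the set of deterministic schedulers (each $\sigma(\pi)$ is Dirac) such that for all finite paths $\pi,\pi'$: if $\mathrm{last}(\pi)=\mathrm{last}(\pi')$ and ($|\pi|=|\pi'|$ or ($|\pi|>k$ and $|\pi'|>k$)), then $\sigma(\pi)=\sigma(\pi')$. *)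

From HB Require Import structures.
From mathcomp Require Import all_boot all_order all_algebra.
From mathcomp Require Import classical_sets reals.
Set Implicit Arguments. Unset Strict Implicit. Unset Printing Implicit Defensive.
Import Order.TTheory GRing.Theory Num.Theory.
Local Open Scope ring_scope.

Section MDP.
Variables (R : realType) (S Act Z : finType).

Definition is_distr (T : finType) (d : T -> R) : Prop :=
  (forall t, 0 <= d t) /\ \sum_(t : T) d t = 1.

(* An MDP <S, iota, Act, P, Z, obs>: the partial transition function is
   [P : S -> Act -> option (S -> R)] (None = undefined). *)
Definition is_mdp (iota : S -> R) (P : S -> Act -> option (S -> R))
    (obs : S -> Z -> R) : Prop :=
  [/\ is_distr iota,
      (forall s a d, P s a = Some d -> is_distr d),
      (forall s, is_distr (obs s)) &
      (forall s, exists a, P s a <> None)].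

Variables (iota : S -> R) (P : S -> Act -> option (S -> R)) (obs : S -> Z -> R).

Definition avail (s : S) (a : Act) : bool := if P s a is Some _ then true else false.

(* P(s,a)(s'), taken to be 0 when P(s,a) is undefined *)
Definition trans (s : S) (a : Act) (s' : S) : R :=
  if P s a is Some d then d s' else 0.

(* A finite sequence s_0 a_0 s_1 ... a_{n-1} s_n, stored as (s_0, [(a_0,s_1);...]) *)
Definition fseq := (S * seq (Act * S))%type.

Definition flen (p : fseq) : nat := size p.2.
Definition flast (p : fseq) : S := last p.1 (map snd p.2).
Definition fstates (p : fseq) : seq S := p.1 :: map snd p.2.

Fixpoint steps_ok (s : S) (t : seq (Act * S)) : bool :=
  if t is (a, s') :: t' then (0 < trans s a s') && steps_ok s' t' else true.

Definition is_path (p : fseq) : bool := (0 < iota p.1) && steps_ok p.1 p.2.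

Definition sched := fseq -> Act -> R.

Definition is_sched (sigma : sched) : Prop :=
  forall p, is_path p ->
    is_distr (sigma p) /\ (forall a, 0 < sigma p a -> avail (flast p) a).

Fixpoint pr_aux (sigma : sched) (s0 : S) (pre : seq (Act * S)) (s : S)
    (t : seq (Act * S)) : R :=
  if t is (a, s') :: t' then
    sigma (s0, pre) a * trans s a s' * pr_aux sigma s0 (rcons pre (a, s')) s' t'
  else 1.

Definition pr_path (sigma : sched) (p : fseq) : R :=
  iota p.1 * pr_aux sigma p.1 [::] p.1 p.2.

Fixpoint obs_pr (ss : seq S) (zs : seq Z) : R :=
  match ss, zs with
  | [::], [::] => 1
  | s :: ss', z :: zs' => obs s z * obs_pr ss' zs'
  | _, _ => 0
  end.

Definition pr_obs (tau : seq Z) (p : fseq) : R := obs_pr (fstates p) tau.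

(* sum over Paths(tau): the paths with as many states as tau has observations *)
Definition sum_paths (tau : seq Z) (F : fseq -> R) : R :=
  \sum_(s0 : S) \sum_(t : ((size tau).-1).-tuple (Act * S) | is_path (s0, val t))
     F (s0, val t).

Definition pr_trace (sigma : sched) (tau : seq Z) : R :=
  sum_paths tau (fun p => pr_path sigma p * pr_obs tau p).

(* Pr^sigma(pi | tau); note x / 0 = 0 in MathComp *)
Definition pr_cond (sigma : sched) (tau : seq Z) (p : fseq) : R :=
  pr_obs tau p * pr_path sigma p / pr_trace sigma tau.

Definition cond_reward (r : S -> R) (sigma : sched) (tau : seq Z) : R :=
  sum_paths tau (fun p => pr_cond sigma tau p * r (flast p)).

Definition Rr (r : S -> R) (tau : seq Z) : R :=
  sup [set v | exists sigma, is_sched sigma /\ v = cond_reward r sigma tau].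

Definition is_dc_sched (k : nat) (sigma : sched) : Prop :=
  [/\ is_sched sigma,
      (forall p, is_path p -> exists a, forall b, sigma p b = if b == a then 1 else 0) &
      (forall p p', is_path p -> is_path p' -> flast p = flast p' ->
         (flen p = flen p' \/ (k < flen p /\ k < flen p')%N) ->
         sigma p = sigma p')].

(* |tau| for tau = z_0 ... z_n is n (number of transitions, as for paths) *)
Definition tlen (tau : seq Z) : nat := (size tau).-1.

End MDP.

From HB Require Import structures.
From mathcomp Require Import all_boot all_order all_algebra.
From mathcomp Require Import classical_sets reals.
From mathcomp Require Import ring.
Set Implicit Arguments. Unset Strict Implicit. Unset Printing Implicit Defensive.
Import Order.TTheory GRing.Theory Num.Theory.
Local Open Scope ring_scope.

(* Write J_sigma(f) for the joint reward sum_pi Pr^sigma(pi) Pr(tau | pi) f(last pi),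
   so that the conditional reward of sigma is J_sigma(r) / J_sigma(1).  For a fixed
   f, backward induction over the remaining observations yields a deterministic
   scheduler maximising J(f) whose choice depends only on the current state and the
   number of steps taken; it is a finite table and lies in Sigma_DC(|tau|).  Let lam
   be the best conditional reward among such tables.  For any scheduler sigma, the
   Bellman-optimal table for the reward r - lam beats sigma on J(r - lam), while its
   own J(r - lam) is at most 0 by the choice of lam; hence J_sigma(r) <= lam J_sigma(1),
   i.e. the conditional reward of sigma is at most lam (Dinkelbach's argument). *)

Lemma sum_tuple0 (V : nmodType) (T : finType) (Q : pred (seq T)) (F : seq T -> V) :
  \sum_(t : 0.-tuple T | Q t) F t = if Q [::] then F [::] else 0.
Proof. by rewrite big_mkcond (big_pred1 [tuple]) // => t; rewrite [t]tuple0 /= eqxx. Qed.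

Lemma sum_tuple_cons (V : nmodType) (T : finType) m (Q : pred (seq T))
    (F : seq T -> V) :
  \sum_(t : m.+1.-tuple T | Q t) F t =
  \sum_(x : T) \sum_(t : m.-tuple T | Q (x :: t)) F (x :: t).
Proof.
rewrite pair_big_dep (reindex (fun p : T * m.-tuple T => [tuple of p.1 :: p.2])) /=.
  by apply: eq_bigl => -[x t].
exists (fun t : m.+1.-tuple T => (thead t, [tuple of behead t])).
  by move=> [x t] _; rewrite /= theadE; congr pair; apply: val_inj.
by move=> t _; rewrite [RHS]tuple_eta.
Qed.

Lemma sum_dirac (V : pzRingType) (T : finType) (b : T) (X : T -> V) :
  \sum_a (if a == b then 1 else 0) * X a = X b.
Proof.
rewrite (bigD1 b) //= eqxx mul1r big1 ?addr0 // => a /negbTE ->.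
by rewrite mul0r.
Qed.

Lemma ler_wdivrMr (R : numFieldType) (a b c : R) :
  0 <= b -> 0 <= c -> (b = 0 -> a = 0) -> (a / b <= c) = (a <= c * b).
Proof.
move=> b_ge0 c_ge0 ab; have [b0|bn0] := eqVneq b 0.
  by rewrite b0 ab // invr0 !mulr0 c_ge0 lexx.
by rewrite ler_pdivrMr // lt_def bn0 b_ge0.
Qed.

Lemma sup_max (R : realType) (E : set R) x : E x -> ubound E x -> sup E = x.
Proof.
move=> Ex ubx; apply/le_anti; rewrite ge_sup //; last by exists x.
by rewrite (ub_le_sup _ Ex) //; exists x.
Qed.

Section ConditionalReward.
Variables (R : realType) (S Act Z : finType) (iota : S -> R)
  (P : S -> Act -> option (S -> R)) (obs : S -> Z -> R).

Local Notation sched := (sched R S Act).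
Local Notation fseq := (fseq S Act).
Local Notation trans := (trans P).
Local Notation is_path := (is_path iota P).
Local Notation is_sched := (is_sched iota P).
Local Notation cond_reward := (cond_reward iota P obs).

Definition extend (h : fseq) (a : Act) (s : S) : fseq := (h.1, rcons h.2 (a, s)).

Lemma flast_extend h a s : flast (extend h a s) = s.
Proof. by rewrite /flast /= map_rcons last_rcons. Qed.

Lemma flen_extend h a s : flen (extend h a s) = (flen h).+1.
Proof. exact: size_rcons. Qed.

Lemma steps_ok_rcons s t a s' :
  steps_ok P s (rcons t (a, s')) =
  steps_ok P s t && (0 < trans (last s (map snd t)) a s').
Proof.
by elim: t s => [|[b x] t IH] s /=; rewrite ?andbT // IH andbA.
Qed.

Lemma is_path_extend h a s :
  is_path h -> 0 < trans (flast h) a s -> is_path (extend h a s).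
Proof. by rewrite /is_path /= steps_ok_rcons andbA => -> ->. Qed.

Definition cont_weight (sigma : sched) (f : S -> R) (h : fseq) (zs : seq Z)
    (t : seq (Act * S)) : R :=
  pr_aux P sigma h.1 h.2 (flast h) t * obs_pr obs (map snd t) zs *
  f (last (flast h) (map snd t)).

Definition cont_reward (sigma : sched) (f : S -> R) (h : fseq) (zs : seq Z) : R :=
  \sum_(t : (size zs).-tuple (Act * S) | steps_ok P (flast h) t)
    cont_weight sigma f h zs t.

Lemma cont_reward_nil sigma f h : cont_reward sigma f h [::] = f (flast h).
Proof. by rewrite /cont_reward sum_tuple0 /cont_weight /= !mul1r. Qed.

Lemma cont_reward_cons sigma f h z zs :
  cont_reward sigma f h (z :: zs) =
  \sum_a \sum_(s | 0 < trans (flast h) a s)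
    sigma h a * trans (flast h) a s * obs s z * cont_reward sigma f (extend h a s) zs.
Proof.
rewrite /cont_reward sum_tuple_cons [RHS]pair_big_dep [RHS]big_mkcond /=.
apply: eq_bigr => -[a s] _ /=; case: ifP => htr; last by rewrite big_pred0.
rewrite big_distrr flast_extend; apply: eq_bigr => t _.
by case: h htr => s0 pre htr; rewrite /cont_weight flast_extend /=; ring.
Qed.

Definition joint_reward (sigma : sched) (f : S -> R) (tau : seq Z) : R :=
  sum_paths iota P tau (fun p => pr_path iota P sigma p * pr_obs obs tau p * f (flast p)).

Lemma joint_rewardE sigma f z zs :
  joint_reward sigma f (z :: zs) =
  \sum_(s | 0 < iota s) iota s * obs s z * cont_reward sigma f (s, [::]) zs.
Proof.
rewrite /joint_reward /sum_paths [RHS]big_mkcond; apply: eq_bigr => s _ /=.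
rewrite /is_path /=; case: ifP => hs; last by rewrite big_pred0.
rewrite /cont_reward big_distrr; apply: eq_bigr => t _.
by rewrite /pr_path /pr_obs /cont_weight /flast /=; ring.
Qed.

Lemma joint_rewardB sigma f g tau :
  joint_reward sigma (fun s => f s - g s) tau =
  joint_reward sigma f tau - joint_reward sigma g tau.
Proof.
rewrite /joint_reward /sum_paths -sumrB; apply: eq_bigr => s _.
by rewrite -sumrB; apply: eq_bigr => t _; ring.
Qed.

Lemma joint_reward_cst sigma c tau :
  joint_reward sigma (fun=> c) tau = c * joint_reward sigma (fun=> 1) tau.
Proof.
rewrite /joint_reward /sum_paths mulr_sumr; apply: eq_bigr => s _.
by rewrite mulr_sumr; apply: eq_bigr => t _; ring.
Qed.

Lemma cond_rewardE f sigma tau :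
  cond_reward f sigma tau = joint_reward sigma f tau / joint_reward sigma (fun=> 1) tau.
Proof.
have -> : joint_reward sigma (fun=> 1) tau = pr_trace iota P obs sigma tau.
  by apply: eq_bigr => s _; apply: eq_bigr => t _; rewrite mulr1.
rewrite /cond_reward /joint_reward /sum_paths mulr_suml; apply: eq_bigr => s _.
by rewrite mulr_suml; apply: eq_bigr => t _; rewrite /pr_cond; ring.
Qed.

Hypothesis HM : is_mdp iota P obs.

Lemma obs_ge0 s z : 0 <= obs s z.
Proof. by case: HM => _ _ /(_ s) [] /(_ z). Qed.

Lemma cont_reward_ge0 sigma f zs : is_sched sigma -> (forall s, 0 <= f s) ->
  forall h, is_path h -> 0 <= cont_reward sigma f h zs.
Proof.
move=> hs hf; elim: zs => [|z zs IH] h hp; first by rewrite cont_reward_nil.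
rewrite cont_reward_cons; apply: sumr_ge0 => a _; apply: sumr_ge0 => s htr.
have [[sigma_ge0 _] _] := hs h hp.
by rewrite !mulr_ge0 ?obs_ge0 ?(ltW htr) // IH // is_path_extend.
Qed.

Lemma joint_reward_ge0 sigma f z zs : is_sched sigma -> (forall s, 0 <= f s) ->
  0 <= joint_reward sigma f (z :: zs).
Proof.
move=> hs hf; rewrite joint_rewardE; apply: sumr_ge0 => s hs0.
by rewrite !mulr_ge0 ?obs_ge0 ?(ltW hs0) // cont_reward_ge0 // /is_path /= hs0.
Qed.

Lemma joint_reward_ler sigma f g z zs : is_sched sigma -> (forall s, f s <= g s) ->
  joint_reward sigma f (z :: zs) <= joint_reward sigma g (z :: zs).
Proof.
move=> hs hfg; rewrite -subr_ge0 -joint_rewardB joint_reward_ge0 // => s.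
by rewrite subr_ge0.
Qed.

Lemma joint_reward_null sigma f z zs : is_sched sigma ->
  joint_reward sigma (fun=> 1) (z :: zs) = 0 -> joint_reward sigma f (z :: zs) = 0.
Proof.
move=> hs null; pose M := \sum_s `|f s|.
have fM s : - M <= f s <= M by rewrite -ler_norml /M (bigD1 s) //= lerDl sumr_ge0.
apply/le_anti/andP; split.
  rewrite -(mulr0 M) -null -joint_reward_cst joint_reward_ler // => s.
  by case/andP: (fM s).
rewrite -(mulr0 (- M)) -null -joint_reward_cst joint_reward_ler // => s.
by case/andP: (fM s).
Qed.

Lemma cond_reward_le f sigma z zs c : is_sched sigma -> 0 <= c ->
  (cond_reward f sigma (z :: zs) <= c) =
  (joint_reward sigma f (z :: zs) <= c * joint_reward sigma (fun=> 1) (z :: zs)).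
Proof.
move=> hs c_ge0; rewrite cond_rewardE ler_wdivrMr //.
  exact: joint_reward_ge0.
exact: joint_reward_null.
Qed.

Lemma cond_reward_ge0 f sigma z zs : is_sched sigma -> (forall s, 0 <= f s) ->
  0 <= cond_reward f sigma (z :: zs).
Proof. by move=> hs hf; rewrite cond_rewardE divr_ge0 ?joint_reward_ge0. Qed.

Variable a0 : S -> Act.
Hypothesis a0_avail : forall s, avail P s (a0 s).

Definition qvalue (W : S -> R) (z : Z) (s : S) (a : Act) : R :=
  \sum_(s' | 0 < trans s a s') trans s a s' * obs s' z * W s'.

Definition best_action (g : Act -> R) (s : S) : Act :=
  [arg max_(a > a0 s | avail P s a) g a]%O.

Lemma best_action_avail g s : avail P s (best_action g s).
Proof. by rewrite /best_action; case: (arg_maxP g (a0_avail s)). Qed.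

Lemma best_action_max g s a : avail P s a -> g a <= g (best_action g s).
Proof. by rewrite /best_action; case: (arg_maxP g (a0_avail s)) => b _; apply. Qed.

Fixpoint opt_value (f : S -> R) (zs : seq Z) : S -> R :=
  if zs is z :: zs' then
    fun s => qvalue (opt_value f zs') z s (best_action (qvalue (opt_value f zs') z s) s)
  else f.

Definition greedy_action (f : S -> R) (zs : seq Z) (s : S) : Act :=
  if zs is z :: zs' then best_action (qvalue (opt_value f zs') z s) s else a0 s.

Lemma opt_value_cons f z zs s :
  opt_value f (z :: zs) s = qvalue (opt_value f zs) z s (greedy_action f (z :: zs) s).
Proof. by []. Qed.

Lemma cont_reward_le_opt sigma f zs : is_sched sigma ->
  forall h, is_path h -> cont_reward sigma f h zs <= opt_value f zs (flast h).
Proof.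
move=> hs; elim: zs => [|z zs IH] h hp; first by rewrite cont_reward_nil.
have [[sigma_ge0 sigma_sum] sigma_avail] := hs h hp.
rewrite cont_reward_cons opt_value_cons.
set g := qvalue (opt_value f zs) z (flast h).
apply: (@le_trans _ _ (\sum_a sigma h a * g a)).
  apply: ler_sum => a _; rewrite /g /qvalue big_distrr /=; apply: ler_sum => s htr.
  rewrite !mulrA; apply: ler_wpM2l; first by rewrite !mulr_ge0 ?obs_ge0 ?(ltW htr).
  by have := IH _ (is_path_extend hp htr); rewrite flast_extend.
rewrite -[X in _ <= X]mul1r -sigma_sum mulr_suml; apply: ler_sum => a _.
have := sigma_ge0 a; rewrite le_eqVlt => /predU1P[<-|pos]; first by rewrite !mul0r.
by apply: ler_wpM2l; rewrite ?(ltW pos) ?best_action_max ?sigma_avail.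
Qed.

(* Row [k] of the table is used after [k] steps; all histories longer than [n]
   share row [n], as Sigma_DC(n) requires. *)
Definition table_sched n (D : {ffun 'I_n.+1 * S -> Act}) : sched :=
  fun h b => if b == D (inord (minn (flen h) n), flast h) then 1 else 0.

Definition table_avail n (D : {ffun 'I_n.+1 * S -> Act}) : bool :=
  [forall x, avail P x.2 (D x)].

Lemma table_sched_is_sched n (D : {ffun 'I_n.+1 * S -> Act}) :
  table_avail D -> is_sched (table_sched D).
Proof.
move=> /forallP D_avail h _; split; first split.
- by move=> a; rewrite /table_sched; case: ifP.
- rewrite -(sum_dirac (D (inord (minn (flen h) n), flast h)) (fun=> 1)).
  by apply: eq_bigr => a _; rewrite mulr1.
- move=> a; rewrite /table_sched; case: ifP => [/eqP -> _|]; last by rewrite ltxx.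
  exact: (D_avail (_, _)).
Qed.

Lemma table_sched_dc n (D : {ffun 'I_n.+1 * S -> Act}) :
  table_avail D -> is_dc_sched iota P n (table_sched D).
Proof.
move=> D_avail; split; first exact: table_sched_is_sched.
  by move=> h _; exists (D (inord (minn (flen h) n), flast h)).
move=> h h' _ _ hlast [hlen|[hn hn']]; rewrite /table_sched hlast ?hlen //.
by rewrite (minn_idPr (ltnW hn)) (minn_idPr (ltnW hn')).
Qed.

Definition greedy_table (f : S -> R) (zs : seq Z) : {ffun 'I_(size zs).+1 * S -> Act} :=
  [ffun x : 'I_(size zs).+1 * S => greedy_action f (drop x.1 zs) x.2].

Lemma greedy_table_avail f zs : table_avail (greedy_table f zs).
Proof.
apply/forallP => -[i s]; rewrite ffunE /=.
by case: (drop i zs) => [|z zs'] /=; [exact: a0_avail | exact: best_action_avail].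
Qed.

Lemma greedy_table_row f zs (h : fseq) : (flen h <= size zs)%N ->
  greedy_table f zs (inord (minn (flen h) (size zs)), flast h) =
  greedy_action f (drop (flen h) zs) (flast h).
Proof. by move=> hle; rewrite ffunE /= (minn_idPl hle) inordK. Qed.

Lemma cont_reward_greedy f zs0 zs h : is_path h -> drop (flen h) zs0 = zs ->
  cont_reward (table_sched (greedy_table f zs0)) f h zs = opt_value f zs (flast h).
Proof.
elim: zs h => [|z zs IH] h hp hd; first by rewrite cont_reward_nil.
have hlt : (flen h < size zs0)%N by rewrite -subn_gt0 -size_drop hd.
rewrite cont_reward_cons /table_sched greedy_table_row ?(ltnW hlt) // hd.
rewrite opt_value_cons -[RHS]sum_dirac.
apply: eq_bigr => a _.
rewrite /qvalue big_distrr /=; apply: eq_bigr => s htr.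
rewrite IH ?is_path_extend ?flast_extend //; first by rewrite !mulrA.
by rewrite flen_extend -add1n -drop_drop hd drop1.
Qed.

Lemma joint_reward_le_greedy sigma f z zs : is_sched sigma ->
  joint_reward sigma f (z :: zs) <=
  joint_reward (table_sched (greedy_table f zs)) f (z :: zs).
Proof.
move=> hs; rewrite !joint_rewardE; apply: ler_sum => s hs0.
have hp : is_path (s, [::]) by rewrite /is_path /= hs0.
apply: ler_wpM2l; first by rewrite mulr_ge0 ?obs_ge0 ?(ltW hs0).
by rewrite cont_reward_greedy ?drop0 //; exact: cont_reward_le_opt.
Qed.

Lemma cond_reward_le_tables r z zs c : 0 <= c ->
  (forall D : {ffun 'I_(size zs).+1 * S -> Act}, table_avail D ->
     cond_reward r (table_sched D) (z :: zs) <= c) ->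
  forall sigma, is_sched sigma -> cond_reward r sigma (z :: zs) <= c.
Proof.
move=> c_ge0 tables_le sigma hs.
have shift sigma' : joint_reward sigma' (fun s => r s - c) (z :: zs) =
    joint_reward sigma' r (z :: zs) - c * joint_reward sigma' (fun=> 1) (z :: zs).
  by rewrite (joint_rewardB _ r (fun=> c)) joint_reward_cst.
have greedy_avail := greedy_table_avail (fun s => r s - c) zs.
rewrite cond_reward_le // -subr_le0 -shift.
apply: le_trans (joint_reward_le_greedy _ z zs hs) _.
rewrite shift subr_le0 -cond_reward_le ?tables_le //.
exact: table_sched_is_sched.
Qed.

Lemma optimal_table r z zs : (forall s, 0 <= r s) ->
  exists2 D : {ffun 'I_(size zs).+1 * S -> Act}, table_avail D &
    forall sigma, is_sched sigma ->
      cond_reward r sigma (z :: zs) <= cond_reward r (table_sched D) (z :: zs).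
Proof.
move=> r_ge0; pose ratio (D : {ffun 'I_(size zs).+1 * S -> Act}) :=
  cond_reward r (table_sched D) (z :: zs).
have D0_avail : table_avail [ffun x : 'I_(size zs).+1 * S => a0 x.2].
  by apply/forallP => x; rewrite ffunE.
have [D D_avail D_max] := arg_maxP ratio D0_avail.
exists D => //; apply: cond_reward_le_tables => //.
exact/cond_reward_ge0/r_ge0/table_sched_is_sched.
Qed.

End ConditionalReward.

Theorem lemma8 (R : realType) (S Act Z : finType) (iota : S -> R)
    (P : S -> Act -> option (S -> R)) (obs : S -> Z -> R)
    (HM : is_mdp iota P obs) (r : S -> R) (hr : forall s, 0 <= r s)
    (tau : seq Z) (htau : (0 < size tau)%N) :
  (* the maximum over Sigma_DC(|tau|) exists and equals R_r(tau) *)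
  exists2 sigma : sched R S Act, is_dc_sched iota P (tlen tau) sigma &
    cond_reward iota P obs r sigma tau = Rr iota P obs r tau /\
    (forall sigma', is_dc_sched iota P (tlen tau) sigma' ->
       cond_reward iota P obs r sigma' tau <= cond_reward iota P obs r sigma tau).
Proof.
have avail_ex s : exists a, avail P s a.
  by case: HM => _ _ _ /(_ s) [a Psa]; exists a; rewrite /avail; case: (P s a) Psa.
have a0_avail s : avail P s (xchoose (avail_ex s)) := xchooseP (avail_ex s).
case: tau htau => [//|z zs] _.
have [D D_avail D_opt] := optimal_table HM a0_avail z zs hr.
exists (table_sched R D); first exact: table_sched_dc.
split; last by move=> sigma [sigma_sched _ _]; exact: D_opt.
apply/esym/sup_max; last by move=> _ [sigma [sigma_sched ->]]; exact: D_opt.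
by exists (table_sched R D); split=> //; exact: table_sched_is_sched.
Qed.
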